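(* Let $S$ be a HeyVL program and let $S'$ be a subprogram obtained from $S$ by only removing (replacing by $\mathtt{skip}$) occurrences of statements that are extensive. Then $S'$ is a verification-witnessing slice of $S$ with respect to $(X,Y)$ for all expectations $X,Y$. Moreover, $\mathrm{vp}[S](Z)\succeq\mathrm{vp}[S'](Z)$ for every expectation $Z$.
   Context: Expectations are functions $X:\mathsf{States}\to[0,\infty]$ on program states, ordered pointwise ($\preceq$, with converse $\succeq$). HeyVL statements and their verification pre-expectation transformer $\mathrm{vp}[S]$ are: assignment $x :\approx p_1\cdot t_1+\dots+p_n\cdot t_n$ with $\mathrm{vp}(X)=\sum_i p_i X[x/t_i]$ (deterministic $x:=a$ gives $X[x/a]$); $\mathtt{reward}\ a$: $X+a$; $S_1;S_2$: $\mathrm{vp}[S_1](\mathrm{vp}[S_2](X))$; $\mathtt{if}(\sqcap)\{S_1\}\mathtt{else}\{S_2\}$ / $\mathtt{if}(\sqcup)\{S_1\}\mathtt{else}\{S_2\}$: pointwise min / max of $\mathrm{vp}[S_1](X),\mathrm{vp}[S_2](X)$; $\mathtt{assert}\ Y$: $\min(Y,X)$; $\mathtt{coassert}\ Y$: $\max(Y,X)$; $\mathtt{assume}\ Y$: $\infty$ where $Y\le X$, $X$ elsewhere; $\mathtt{coassume}\ Y$: $0$ where $Y\ge X$, $X$ elsewhere; $\mathtt{havoc}\ x$/$\mathtt{cohavoc}\ x$: pointwise inf/sup of $X$ over values of $x$; $\mathtt{validate}$: $\infty$ where $X=\infty$, else $0$; $\mathtt{covalidate}$: $0$ where $X=0$,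 else $\infty$. $\mathrm{vp}[\mathtt{skip}](X)=X$. A statement $S$ is extensive if $\mathrm{vp}[S](X)\succeq X$ for all $X$. Write $\models\{X\}S\{Y\}$ iff $X\preceq\mathrm{vp}[S](Y)$. A subprogram $P$ of $S$ is a verification-witnessing slice of $S$ w.r.t. $(X,Y)$ if $\models\{X\}P\{Y\}$ implies $\models\{X\}S\{Y\}$. *)

From HB Require Import structures.
From mathcomp Require Import all_boot all_order all_algebra.
From mathcomp Require Import classical_sets reals constructive_ereal ereal.
Set Implicit Arguments. Unset Strict Implicit. Unset Printing Implicit Defensive.
Import Order.TTheory GRing.Theory Num.Theory.
Local Open Scope classical_set_scope.
Local Open Scope ring_scope.

Section HeyVL.
Variables (R : realType) (Var : eqType) (Val : Type).

Definition State := Var -> Val.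
Definition upd (s : State) (x : Var) (v : Val) : State :=
  fun y => if y == x then v else s y.

(* Expectations: maps States -> [0, +oo], modelled in \bar R with a
   nonnegativity predicate. *)
Definition Exp := State -> \bar R.
Definition expectation (X : Exp) : Prop := forall s, (0 <= X s)%E.

(* HeyVL statements. [Asgn x l] is x :~ p_1 * t_1 + ... + p_n * t_n, with
   l = [:: (p_1, t_1); ...; (p_n, t_n)] (p_i probability expressions,
   t_i value expressions). *)
Inductive stmt : Type :=
| Skip
| Asgn of Var & seq ((State -> R) * (State -> Val))
| Reward of Exp
| Seq of stmt & stmt
| IfDemon of stmt & stmt
| IfAngel of stmt & stmt
| Assert of Exp
| Coassert of Exp
| Assume of Exp
| Coassume of Exp
| Havoc of Var
| Cohavoc of Var
| Validate
| Covalidate.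

Local Open Scope ereal_scope.

Fixpoint vp (S : stmt) (X : Exp) : Exp :=
  match S with
  | Skip => X
  | Asgn x l => fun s => \sum_(pt <- l) ((pt.1 s)%:E * X (upd s x (pt.2 s)))
  | Reward a => fun s => X s + a s
  | Seq S1 S2 => vp S1 (vp S2 X)
  | IfDemon S1 S2 => fun s => Order.min (vp S1 X s) (vp S2 X s)
  | IfAngel S1 S2 => fun s => Order.max (vp S1 X s) (vp S2 X s)
  | Assert Y => fun s => Order.min (Y s) (X s)
  | Coassert Y => fun s => Order.max (Y s) (X s)
  | Assume Y => fun s => if Y s <= X s then +oo else X s
  | Coassume Y => fun s => if X s <= Y s then 0 else X s
  | Havoc x => fun s => ereal_inf [set X (upd s x v) | v in [set: Val]]
  | Cohavoc x => fun s => ereal_sup [set X (upd s x v) | v in [set: Val]]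
  | Validate => fun s => if X s == +oo then +oo else 0
  | Covalidate => fun s => if X s == 0 then 0 else +oo
  end.

Fixpoint wf (S : stmt) : Prop :=
  match S with
  | Skip | Havoc _ | Cohavoc _ | Validate | Covalidate => True
  | Asgn _ l => forall s, all (fun pt => (0 <= pt.1 s)%R) l /\
                          (\sum_(pt <- l) pt.1 s)%R = 1%R
  | Reward a | Assert a | Coassert a | Assume a | Coassume a => expectation a
  | Seq S1 S2 | IfDemon S1 S2 | IfAngel S1 S2 => wf S1 /\ wf S2
  end.

Definition eleq (X Y : Exp) : Prop := forall s, X s <= Y s.

Definition extensive (S : stmt) : Prop :=
  forall X, expectation X -> eleq X (vp S X).

Definition valid (X : Exp) (S : stmt) (Y : Exp) : Prop := eleq X (vp S Y).

Definition vw_slice (P S : stmt) (X Y : Exp) : Prop :=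
  valid X P Y -> valid X S Y.

Inductive removes_ext : stmt -> stmt -> Prop :=
| re_refl S : removes_ext S S
| re_skip S : extensive S -> removes_ext S Skip
| re_seq S1 S2 S1' S2' : removes_ext S1 S1' -> removes_ext S2 S2' ->
    removes_ext (Seq S1 S2) (Seq S1' S2')
| re_demon S1 S2 S1' S2' : removes_ext S1 S1' -> removes_ext S2 S2' ->
    removes_ext (IfDemon S1 S2) (IfDemon S1' S2')
| re_angel S1 S2 S1' S2' : removes_ext S1 S1' -> removes_ext S2 S2' ->
    removes_ext (IfAngel S1 S2) (IfAngel S1' S2').

End HeyVL.

From HB Require Import structures.
From mathcomp Require Import all_boot all_order all_algebra.
From mathcomp Require Import classical_sets reals constructive_ereal ereal.
Set Implicit Arguments.
Unset Strict Implicit.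
Unset Printing Implicit Defensive.
Import Order.TTheory GRing.Theory Num.Theory.

(* For well-formed programs, vp maps expectations to expectations and is
   monotone on them.  Replacing an extensive statement S by skip replaces
   vp S Z by Z, which is below vp S Z; every program context (sequencing,
   demonic and angelic choice) is monotone, so the inequality propagates to
   vp S' Z <= vp S Z. *)

Local Open Scope ereal_scope.

Section VpMonotone.
Variables (R : realType) (Var : eqType) (Val : Type).
Implicit Types (S : stmt R Var Val) (X Y Z : Exp R Var Val).

Lemma vp_ge0 S X : wf S -> expectation X -> expectation (vp S X).
Proof.
elim: S X => /=.
- by [].
- move=> x l X wfl X0 s; rewrite -(all_filterP (wfl s).1) big_filter.
  by apply: sume_ge0 => pt p0; apply: mule_ge0; rewrite ?lee_fin.
- by move=> a X a0 X0 s; apply: adde_ge0.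
- by move=> S1 IH1 S2 IH2 X [w1 w2] X0; apply: IH1 (IH2 _ w2 X0).
- move=> S1 IH1 S2 IH2 X [w1 w2] X0 s.
  by rewrite le_min (IH1 _ w1 X0 s) (IH2 _ w2 X0 s).
- by move=> S1 IH1 S2 IH2 X [w1 _] X0 s; rewrite le_max (IH1 _ w1 X0 s).
- by move=> a X a0 X0 s; rewrite le_min a0 X0.
- by move=> a X a0 X0 s; rewrite le_max a0.
- by move=> a X _ X0 s; case: ifP.
- by move=> a X _ X0 s; case: ifP.
- by move=> x X _ X0 s; apply: le_ereal_inf_tmp => _ [v _ <-].
- move=> x X _ X0 s; apply: le_trans (X0 (upd s x (s x))) _.
  by apply: ereal_sup_ubound; exists (s x).
- by move=> X _ X0 s; case: ifP.
- by move=> X _ X0 s; case: ifP.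
Qed.

Lemma le_vp S X X' : wf S -> expectation X -> eleq X X' ->
  eleq (vp S X) (vp S X').
Proof.
elim: S X X' => /=.
- by [].
- move=> x l X X' wfl _ XX' s; rewrite -(all_filterP (wfl s).1) !big_filter.
  by apply: lee_sum => pt p0; apply: lee_wpmul2l; rewrite ?lee_fin.
- by move=> a X X' _ _ XX' s; apply: leeD.
- move=> S1 IH1 S2 IH2 X X' [w1 w2] X0 XX'.
  by apply: IH1 => //; [apply: vp_ge0 | apply: IH2].
- move=> S1 IH1 S2 IH2 X X' [w1 w2] X0 XX' s.
  by rewrite le_min !ge_min (IH1 _ _ w1 X0 XX' s) (IH2 _ _ w2 X0 XX' s) orbT.
- move=> S1 IH1 S2 IH2 X X' [w1 w2] X0 XX' s.
  by rewrite ge_max !le_max (IH1 _ _ w1 X0 XX' s) (IH2 _ _ w2 X0 XX' s) orbT.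
- by move=> a X X' _ _ XX' s; rewrite le_min !ge_min XX' lexx orbT.
- by move=> a X X' _ _ XX' s; rewrite ge_max !le_max XX' lexx orbT.
- move=> a X X' _ _ XX' s; case: ifP => [aX|_].
    by rewrite (le_trans aX (XX' s)).
  by case: ifP => _; [exact: leey | exact: XX'].
- move=> a X X' _ X0 XX' s; case: ifP => [_|Xa].
    by case: ifP => // _; apply: le_trans (X0 s) (XX' s).
  by case: ifP => [X'a|_]; [rewrite (le_trans (XX' s) X'a) in Xa | exact: XX'].
- move=> x X X' _ _ XX' s; apply: le_ereal_inf_tmp => _ [v _ <-].
  by apply: le_trans (XX' _); apply: ereal_inf_lbound; exists v.
- move=> x X X' _ _ XX' s; apply: ge_ereal_sup => _ [v _ <-].
  by apply: le_trans (XX' _) _; apply: ereal_sup_ubound; exists v.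
- move=> X X' _ _ XX' s; case: ifP => [/eqP Xoo|]; last by case: ifP.
  by have := XX' s; rewrite Xoo leye_eq => ->.
- move=> X X' _ X0 XX' s; case: ifP => [_|/negbT Xn0]; first by case: ifP.
  case: ifP => // /eqP X'0; have := XX' s; rewrite X'0 => X_le0.
  by rewrite eq_le X_le0 X0 in Xn0.
Qed.

Lemma wf_removes_ext S S' : removes_ext S S' -> wf S -> wf S'.
Proof. by elim=> //= ? ? ? ? _ IH1 _ IH2 [/IH1 ? /IH2 ?]. Qed.

Lemma le_vp_removes_ext S S' : removes_ext S S' -> wf S ->
  forall Z, expectation Z -> eleq (vp S' Z) (vp S Z).
Proof.
elim=> {S S'} /=.
- by move=> S _ Z _ s.
- by move=> S ext _ Z; apply: ext.
- move=> S1 S2 S1' S2' r1 IH1 r2 IH2 [w1 w2] Z Z0 s.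
  have wf1' := wf_removes_ext r1 w1; have wf2' := wf_removes_ext r2 w2.
  apply: (le_trans (y := vp S1' (vp S2 Z) s)).
    exact: le_vp wf1' (vp_ge0 wf2' Z0) (IH2 w2 _ Z0) s.
  exact: IH1 w1 _ (vp_ge0 w2 Z0) s.
- move=> S1 S2 S1' S2' r1 IH1 r2 IH2 [w1 w2] Z Z0 s.
  by rewrite le_min !ge_min (IH1 w1 _ Z0 s) (IH2 w2 _ Z0 s) orbT.
- move=> S1 S2 S1' S2' r1 IH1 r2 IH2 [w1 w2] Z Z0 s.
  by rewrite ge_max !le_max (IH1 w1 _ Z0 s) (IH2 w2 _ Z0 s) orbT.
Qed.

End VpMonotone.

Theorem theorem3 (R : realType) (Var : eqType) (Val : Type)
    (S S' : stmt R Var Val) :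
  wf S -> removes_ext S S' ->
  (forall X Y : Exp R Var Val, expectation X -> expectation Y ->
     vw_slice S' S X Y) /\
  (forall Z : Exp R Var Val, expectation Z -> eleq (vp S' Z) (vp S Z)).
Proof.
move=> wfS r; have le_vpS' := le_vp_removes_ext r wfS.
split=> [X Y _ Y0 XS'Y s|]; last exact: le_vpS'.
exact: le_trans (XS'Y s) (le_vpS' Y Y0 s).
Qed.
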